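(* Let $r\ge 4$ and let $p_1,\dots,p_r$ be points in general position in $\mathbb{P}^3$ over an algebraically closed field of characteristic $0$. For integers $d\ge 0$ and $m_1,\dots,m_r\ge 0$, let $\mathcal{L}=\mathcal{L}_3(d,m_1,\dots,m_r)$ and put $k=2d-\sum_{i=1}^4 m_i$ and $$\mathrm{Cr}(\mathcal{L})=\mathcal{L}_3(d+k,\,m_1+k,\dots,m_4+k,\,m_5,\dots,m_r).$$ Suppose that $2d\ge m_i+m_j+m_k$ for every choice of three distinct indices $\{i,j,k\}\subset\{1,2,3,4\}$. For $1\le i<j\le 4$ set $t_{ij}=m_i+m_j-d$. Then $$v(\mathrm{Cr}(\mathcal{L}))-v(\mathcal{L})=\sum_{\substack{1\le i<j\le 4\\ t_{ij}\ge 2}}\binom{1+t_{ij}}{3}-\sum_{\substack{1\le i<j\le 4\\ t_{ij}\le -2}}\binom{1-t_{ij}}{3}.$$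
   Context: $\mathcal{L}_3(d,m_1,\dots,m_r)$ denotes the linear system of surfaces of degree $d$ in $\mathbb{P}^3$ passing through the general points $p_1,\dots,p_r$ with multiplicity at least $m_i$ at $p_i$. Its virtual dimension is $v(\mathcal{L}_3(d,m_1,\dots,m_r))=\binom{d+3}{3}-\sum_{i=1}^r\binom{m_i+2}{3}-1$. The system $\mathrm{Cr}(\mathcal{L})$ is the image of $\mathcal{L}$ under the cubo-cubic Cremona transformation $(x_0:x_1:x_2:x_3)\dashrightarrow(x_0^{-1}:x_1^{-1}:x_2^{-1}:x_3^{-1})$ with $p_1,\dots,p_4$ placed at the coordinate points. *)

From mathcomp Require Import all_boot all_order all_algebra.
Set Implicit Arguments. Unset Strict Implicit. Unset Printing Implicit Defensive.
Import Order.TTheory GRing.Theory Num.Theory.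
Local Open Scope ring_scope.

(* Binomial coefficient binom(n, k) for an integer top argument n;
   set to 0 for n < 0 (never used in that range under the hypotheses). *)
Definition binz (n : int) (k : nat) : int :=
  if (0 <= n) then (('C(`|n|%N, k))%:Z) else 0.

Definition vdim3 (d : int) (m : seq int) : int :=
  binz (d + 3) 3 - \sum_(x <- m) binz (x + 2) 3 - 1.

(* The linear system L_3(d, m) with integer data, m = [m_1; ...; m_r]
   (indices shifted: p_1..p_4 are positions 0..3). *)
Definition sysL (d : nat) (m : seq nat) : int * seq int :=
  (d%:Z, [seq (x%:Z) | x <- m]).

Definition vL (L : int * seq int) : int := vdim3 L.1 L.2.

Definition kCr (d : nat) (m : seq nat) : int :=
  2 * d%:Z - \sum_(i < 4) (nth 0%N m i)%:Z.

Definition Cr (d : nat) (m : seq nat) : int * seq int :=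
  (d%:Z + kCr d m,
   [seq (if (i < 4)%N then (nth 0%N m i)%:Z + kCr d m else (nth 0%N m i)%:Z)
   | i <- iota 0 (size m)]).

Definition tij (d : nat) (m : seq nat) (i j : nat) : int :=
  (nth 0%N m i)%:Z + (nth 0%N m j)%:Z - d%:Z.

From mathcomp Require Import all_boot all_order all_algebra.
From mathcomp Require Import zify ring.
Import Order.TTheory GRing.Theory Num.Theory.
Local Open Scope ring_scope.

(* Multiplied by 6, every binomial coefficient occurring in the statement is a
   cubic polynomial [ffact3] in the data, provided its top argument is
   nonnegative; the hypothesis on triples of multiplicities is exactly what
   guarantees this for Cr(L).  The correction terms on the right-hand side are
   [ffact3 (t_ij + 1) / 6] for every t_ij (both sides vanish for |t_ij| <= 1),
   so the theorem reduces to a polynomial identity in d, m_1, ..., m_4. *)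

Definition ffact3 {R : pzRingType} (x : R) : R := x * (x - 1) * (x - 2).

Lemma bin2Z (n : nat) : (2 * 'C(n, 2))%:Z = n%:Z * (n%:Z - 1).
Proof.
elim: n => [|n IHn] //.
rewrite binS bin1 PoszM PoszD mulrDr -PoszM IHn -[n.+1]addn1 PoszD; ring.
Qed.

Lemma bin3Z (n : nat) : (6 * 'C(n, 3))%:Z = ffact3 n%:Z.
Proof.
elim: n => [|n IHn] //.
have IH2 := bin2Z n; rewrite PoszM in IH2.
rewrite binS mulnDr PoszD IHn PoszM /ffact3 -[n.+1]addn1 PoszD; lia.
Qed.

Lemma binz3E (n : int) : 0 <= n -> 6 * binz n 3 = ffact3 n.
Proof. by move=> hn; rewrite /binz hn; case: n hn => // n _; rewrite -bin3Z PoszM. Qed.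

Definition sbin3 (t : int) : int :=
  (if 2 <= t then binz (1 + t) 3 else 0) - (if t <= -2 then binz (1 - t) 3 else 0).

Lemma sbin3E (t : int) : 6 * sbin3 t = ffact3 (t + 1).
Proof.
rewrite /sbin3; case: (lerP 2 t) => [t_ge2 | t_lt2].
  have -> : (t <= -2) = false by apply/negbTE; rewrite -ltNge; lia.
  rewrite subr0 binz3E /ffact3; [ring | lia].
case: (lerP t (-2)) => [t_leN2 | t_gtN2].
  rewrite sub0r mulrN binz3E /ffact3; [ring | lia].
have : (t == -1) || (t == 0) || (t == 1) by lia.
by case/orP => [/orP[]|] /eqP ->.
Qed.

Lemma cremona_ffact3 {R : comPzRingType} (d : R) (m : nat -> R) :
  let k := 2 * d - \sum_(i < 4) m i in
  ffact3 (d + k + 3) - ffact3 (d + 3)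
    - \sum_(i < 4) (ffact3 (m i + k + 2) - ffact3 (m i + 2))
  = \sum_(i < 4) \sum_(j < 4 | (i < j)%N) ffact3 (m i + m j - d + 1).
Proof.
rewrite /= !big_ord_recl !big_ord0.
do 4 rewrite big_mkcond !big_ord_recl big_ord0 /=.
rewrite /ffact3; ring.
Qed.

Lemma vL_Cr_sub (d : nat) (m : seq nat) : (4 <= size m)%N ->
  vL (Cr d m) - vL (sysL d m)
  = binz (d%:Z + kCr d m + 3) 3 - binz (d%:Z + 3) 3
    - \sum_(i < 4) (binz ((nth 0%N m i)%:Z + kCr d m + 2) 3
                    - binz ((nth 0%N m i)%:Z + 2) 3).
Proof.
case: m => [|a [|b [|c [|e rest]]]] //= _.
rewrite /vL /vdim3 /Cr /sysL /= -/(kCr d [:: a, b, c, e & rest]).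
set k := kCr _ _.
have -> : [seq (if (i < 4)%N then (nth 0%N [:: a, b, c, e & rest] i)%:Z + k
                else (nth 0%N [:: a, b, c, e & rest] i)%:Z) | i <- iota 4 (size rest)]
          = [seq x%:Z | x <- rest].
  rewrite (iotaDl 4 0) -map_comp -[in RHS](mkseq_nth 0%N rest) /mkseq -map_comp.
  exact: eq_map.
rewrite !big_cons !big_ord_recl big_ord0 /=; ring.
Qed.

Lemma kCrE (d : nat) (m : seq nat) :
  kCr d m = 2 * d%:Z
            - ((nth 0%N m 0)%:Z + (nth 0%N m 1)%:Z + (nth 0%N m 2)%:Z + (nth 0%N m 3)%:Z).
Proof. by rewrite /kCr !big_ord_recl big_ord0 !addrA addr0. Qed.

Section CremonaNonneg.

Context {d : nat} {m : seq nat}.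
Hypothesis h3 : forall i j k : 'I_4, i != j -> j != k -> i != k ->
  (nth 0 m i + nth 0 m j + nth 0 m k <= 2 * d)%N.

Let triple_bounds :
  [/\ (nth 0 m 0 + nth 0 m 1 + nth 0 m 2 <= 2 * d)%N,
      (nth 0 m 0 + nth 0 m 1 + nth 0 m 3 <= 2 * d)%N,
      (nth 0 m 0 + nth 0 m 2 + nth 0 m 3 <= 2 * d)%N &
      (nth 0 m 1 + nth 0 m 2 + nth 0 m 3 <= 2 * d)%N].
Proof. by split; [apply: (h3 0 1 2) | apply: (h3 0 1 3) | apply: (h3 0 2 3) | apply: (h3 1 2 3)]. Qed.

Lemma kCr_deg_ge0 : 0 <= d%:Z + kCr d m.
Proof. rewrite kCrE; case: triple_bounds; lia. Qed.

(* m_i + k is 2d minus the sum of the three other multiplicities. *)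
Lemma kCr_mult_ge0 (i : 'I_4) : 0 <= (nth 0%N m i)%:Z + kCr d m.
Proof.
rewrite kCrE; case: triple_bounds; case: i => [[|[|[|[|]]]]] //= _; lia.
Qed.

Lemma six_vL_Cr_sub : (4 <= size m)%N ->
  6 * (vL (Cr d m) - vL (sysL d m))
  = ffact3 (d%:Z + kCr d m + 3) - ffact3 (d%:Z + 3)
    - \sum_(i < 4) (ffact3 ((nth 0%N m i)%:Z + kCr d m + 2)
                    - ffact3 ((nth 0%N m i)%:Z + 2)).
Proof.
move=> size_m; rewrite vL_Cr_sub // !mulrBr mulr_sumr.
rewrite !binz3E //; last by have := kCr_deg_ge0; lia.
congr (_ - _); apply: eq_bigr => i _.
by rewrite mulrBr !binz3E //; have := kCr_mult_ge0 i; lia.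
Qed.

End CremonaNonneg.

Theorem mainTheorem1 (r d : nat) (m : seq nat)
  (hr : (4 <= r)%N) (hm : size m = r)
  (h3 : forall i j k : 'I_4, i != j -> j != k -> i != k ->
        (nth 0 m i + nth 0 m j + nth 0 m k <= 2 * d)%N) :
  vL (Cr d m) - vL (sysL d m) =
    \sum_(i < 4) \sum_(j < 4 | (i < j)%N)
       (if 2 <= tij d m i j then binz (1 + tij d m i j) 3 else 0)
  - \sum_(i < 4) \sum_(j < 4 | (i < j)%N)
       (if tij d m i j <= -2 then binz (1 - tij d m i j) 3 else 0).
Proof.
rewrite -sumrB; under eq_bigr do rewrite -sumrB.
apply: (@mulfI _ 6) => //.
rewrite (six_vL_Cr_sub h3) ?hm // (cremona_ffact3 d%:Z (fun i => (nth 0%N m i)%:Z)).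
rewrite mulr_sumr; apply: eq_bigr => i _; rewrite mulr_sumr; apply: eq_bigr => j _.
by rewrite sbin3E.
Qed.
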